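(* Let $q$ be a prime power with $q>2$, $m,n\ge1$, and let $\mathscr{C}\subseteq\mathrm{GF}(q^m)^n$ be a scalable code. Let $f:\mathrm{GF}(q^m)^n\times\mathrm{GF}(q^m)^n\to\mathrm{GF}(q^m)$ be a biadditive form and $\tilde f$ the biadditive form on $\mathrm{GF}(q)^{mn}$ induced by $f$. Suppose $\mathrm{Im}_{\mathscr{B}}(\mathscr{C})$ is self-orthogonal w.r.t. $\tilde f$ for three bases $\mathscr{B}_1,\mathscr{B}_2,\mathscr{B}_3$ of $\mathrm{GF}(q^m)$ over $\mathrm{GF}(q)$ whose dual bases are $\mathscr{B}_1'=\{\beta_1,\ldots,\beta_m\}$, $\mathscr{B}_2'=\{\beta_1+\alpha\beta_2,\beta_2,\ldots,\beta_m\}$ and $\mathscr{B}_3'=\{\beta_1+\gamma\beta_2,\beta_2,\ldots,\beta_m\}$, where $\alpha,\gamma$ are distinct nonzero elements of $\mathrm{GF}(q)$. Then $\mathrm{Tr}(\mathscr{C})$ is self-orthogonal w.r.t. $f$ (restricted to $\mathrm{GF}(q)^n\times\mathrm{GF}(q)^n$), and $\mathrm{Im}_{\mathscr{B}}(\mathscr{C})$ is self-orthogonal w.r.t. $\tilde f$ for every basis $\mathscr{B}$ of $\mathrm{GF}(q^m)$ over $\mathrm{GF}(q)$.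
   Context: $\mathrm{Tr}:\mathrm{GF}(q^m)\to\mathrm{GF}(q)$, $\mathrm{Tr}(a)=\sum_{i=0}^{m-1}a^{q^i}$. The dual basis of a basis $\{\gamma_1,\ldots,\gamma_m\}$ of $\mathrm{GF}(q^m)$ over $\mathrm{GF}(q)$ is the unique basis $\{\beta_1,\ldots,\beta_m\}$ with $\mathrm{Tr}(\gamma_i\beta_j)=\delta_{ij}$. A code $\mathscr{C}\subseteq\mathrm{GF}(q^m)^n$ is scalable if $x\in\mathscr{C}\Rightarrow\alpha x\in\mathscr{C}$ for all $\alpha\in\mathrm{GF}(q^m)$. A biadditive form is additive in each argument. For a basis $\mathscr{B}$ with dual basis $\{\beta_1,\ldots,\beta_m\}$, $\mathrm{Im}_{\mathscr{B}}(\mathscr{C})=\{(\mathrm{Tr}(\beta_1x_1),\ldots,\mathrm{Tr}(\beta_1x_n),\ldots,\mathrm{Tr}(\beta_mx_1),\ldots,\mathrm{Tr}(\beta_mx_n)):x\in\mathscr{C}\}\subseteq\mathrm{GF}(q)^{mn}$, and $\mathrm{Tr}(\mathscr{C})=\{(\mathrm{Tr}(x_1),\ldots,\mathrm{Tr}(x_n)):x\in\mathscr{C}\}$. The induced form is $\tilde f(x,y)=\sum_{i=0}^{m-1}f((x_{in+1},\ldots,x_{in+n}),(y_{in+1},\ldots,y_{in+n}))$ for $x,y\in\mathrm{GF}(q)^{mn}$. A code $D$ is self-orthogonal w.r.t. a form $g$ if $g(x,y)=0$ for all $x,y\in D$. *)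

From HB Require Import structures.
From mathcomp Require Import all_boot all_order all_algebra.
Set Implicit Arguments. Unset Strict Implicit. Unset Printing Implicit Defensive.
Import Order.TTheory GRing.Theory.
Local Open Scope ring_scope.

(* GF(q) is realized as the subfield {x in L | x^q = x} of L, and all
   vectors over GF(q) are represented as L-valued vectors with entries in
   that subfield. *)

Section Defs.
Variable L : finFieldType.

Definition subGF (q : nat) : pred L := fun x => x ^+ q == x.

Definition Tr (q m : nat) (a : L) : L := \sum_(i < m) a ^+ (q ^ i).

Definition is_basis (q m : nat) (B : 'I_m -> L) : Prop :=
  (forall c : 'I_m -> L, (forall i, c i \in subGF q) ->
      \sum_(i < m) c i * B i = 0 -> forall i, c i = 0)
  /\ (forall x : L, exists c : 'I_m -> L,
        (forall i, c i \in subGF q) /\ x = \sum_(i < m) c i * B i).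

Definition is_dual_basis (q m : nat) (B b : 'I_m -> L) : Prop :=
  forall i j : 'I_m, Tr q m (B i * b j) = (i == j)%:R.

Definition scalable_code (n : nat) (C : {set 'rV[L]_n}) : Prop :=
  forall (a : L) (x : 'rV[L]_n), x \in C -> a *: x \in C.

Definition biadditive (V : zmodType) (f : V -> V -> L) : Prop :=
  (forall x y z, f (x + y) z = f x z + f y z) /\
  (forall x y z, f x (y + z) = f x y + f x z).

(* Im_B(C), where b is the dual basis of B.  An element of GF(q)^{mn} is
   stored as an m x n matrix whose i-th row is the i-th block of n
   coordinates (Tr(b_i x_1), ..., Tr(b_i x_n)). *)
Definition ImB (q m n : nat) (b : 'I_m -> L) (C : {set 'rV[L]_n})
  : {set 'M[L]_(m, n)} :=
  [set (\matrix_(i < m, k < n) Tr q m (b i * x 0 k)) | x : 'rV[L]_n in C].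

Definition TrC (q m n : nat) (C : {set 'rV[L]_n}) : {set 'rV[L]_n} :=
  [set (\row_(k < n) Tr q m (x 0 k)) | x : 'rV[L]_n in C].

Definition induced (m n : nat) (f : 'rV[L]_n -> 'rV[L]_n -> L)
  (X Y : 'M[L]_(m, n)) : L :=
  \sum_(i < m) f (row i X) (row i Y).

Definition self_orth (V : finType) (g : V -> V -> L) (D : {set V}) : Prop :=
  forall x y, x \in D -> y \in D -> g x y = 0.

(* the dual basis {b_1 + a b_2, b_2, ..., b_m} (needs 1 < m) *)
Definition modify_dual (m : nat) (h : (1 < m)%N) (b : 'I_m -> L) (a : L)
  : 'I_m -> L :=
  fun j => if val j == 0%N then b j + a * b (Ordinal h) else b j.

End Defs.

From HB Require Import structures.
From mathcomp Require Import all_boot all_order all_algebra finfield.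
From mathcomp Require Import ring.
Import Order.TTheory GRing.Theory.
Local Open Scope ring_scope.

(* For x, y in C the map h(l, mu) = f(Tr(l x), Tr(mu y)) is biadditive on GF(q^m), and, C being
   scalable, Im_B(C) is self-orthogonal iff sum_i h(b_i l, b_i mu) = 0 for all l, mu, where
   (b_i) is the dual basis of B.  Subtracting this identity for B1 from those for B2 and B3
   shows, with g(l, mu) = h(beta_2 l, beta_2 mu) and t = beta_1 / beta_2 (not in GF(q)), that
   multiplication by u = t / alpha, resp. s u with s = alpha / gamma, is g-adjoint to
   multiplication by -1 - u, resp. -1 - s u.  Applying Frobenius, u^q - u is adjoint to its
   negative, and so is s (u^q - u) since s lies in GF(q); hence s is self-adjoint, and
   comparing the two relations gives g(l, (1 - s) mu) = 0, i.e. g = 0 as s <> 1.  Thus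
   f(Tr x, Tr y) = h(1, 1) = 0, which makes every term of every induced form vanish. *)

Section Biadditive.
Context {U V W : zmodType} {g : U -> V -> W}.
Hypothesis gDl : forall x y z, g (x + y) z = g x z + g y z.
Hypothesis gDr : forall x y z, g x (y + z) = g x y + g x z.

Lemma biadd0l z : g 0 z = 0.
Proof. by apply: (addrI (g 0 z)); rewrite -gDl !addr0. Qed.

Lemma biadd0r z : g z 0 = 0.
Proof. by apply: (addrI (g z 0)); rewrite -gDr !addr0. Qed.

Lemma biaddNr x z : g z (- x) = - g z x.
Proof. by apply: (addrI (g z x)); rewrite -gDr !subrr biadd0r. Qed.

Lemma biaddBl x y z : g (x - y) z = g x z - g y z.
Proof. by apply: (addIr (g y z)); rewrite -gDl !subrK. Qed.

Lemma biaddBr x y z : g z (x - y) = g z x - g z y.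
Proof. by rewrite gDr biaddNr. Qed.

End Biadditive.

Definition mul_adjoint {F : fieldType} {W : zmodType} (g : F -> F -> W) (a b : F) :=
  forall l mu, g (a * l) mu = g l (b * mu).

Section MulAdjoint.
Context {F : fieldType} {W : zmodType} {g : F -> F -> W}.

Lemma mul_adjointM {a b c d} :
  mul_adjoint g a b -> mul_adjoint g c d -> mul_adjoint g (a * c) (b * d).
Proof. by move=> ab cd l mu; rewrite -[a * c * l]mulrA mulrCA cd ab mulrA. Qed.

Lemma mul_adjointX {a b} n : mul_adjoint g a b -> mul_adjoint g (a ^+ n) (b ^+ n).
Proof.
move=> ab; elim: n => [|n IHn]; first by move=> l mu; rewrite !expr0 !mul1r.
by rewrite !exprS; apply: mul_adjointM.
Qed.

Lemma mul_adjoint_frobenius {q u} :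
  [pchar F].-nat q -> mul_adjoint g u (-1 - u) ->
  mul_adjoint g (u ^+ q) (-1 - u ^+ q).
Proof.
move=> pq /(mul_adjointX q).
by rewrite exprDn_pchar // !exprNn_pchar // expr1n.
Qed.

Lemma mul_adjoint_cancel {a b c d} :
  mul_adjoint g c d -> mul_adjoint g (a * c) (b * d) -> d != 0 -> mul_adjoint g a b.
Proof.
move=> cd acbd d0 l mu; rewrite -[mu](mulVKf d0) -(cd (a * l)).
by rewrite mulrA [c * a]mulrC acbd -mulrA.
Qed.

Hypothesis gDl : forall x y z, g (x + y) z = g x z + g y z.
Hypothesis gDr : forall x y z, g x (y + z) = g x y + g x z.

Lemma mul_adjointB {a b c d} :
  mul_adjoint g a b -> mul_adjoint g c d -> mul_adjoint g (a - c) (b - d).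
Proof. by move=> ab cd l mu; rewrite !mulrBl (biaddBl gDl) (biaddBr gDr) ab cd. Qed.

Lemma mul_adjoint0_eq0 {c} : c != 0 -> mul_adjoint g 0 c -> forall l mu, g l mu = 0.
Proof. by move=> c0 h l mu; rewrite -[mu](mulVKf c0) -h mul0r (biadd0l gDl). Qed.

Lemma mul_adjoint_of_cross {t a} : a != 0 ->
  (forall l mu, g (t * l) (a * mu) + g (a * l) (t * mu) + g (a * l) (a * mu) = 0) ->
  mul_adjoint g (t / a) (-1 - t / a).
Proof.
move=> a0 cross l mu; have := cross (l / a) (mu / a).
rewrite !mulrA !(mulrC a) !mulfK // [t * l / a]mulrAC [t * mu / a]mulrAC.
move/eqP; rewrite -addrA addr_eq0 => /eqP ->.
by rewrite mulrBl mulN1r (biaddBr gDr) (biaddNr gDr) opprD addrC.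
Qed.

Lemma biadditive_eq0_of_mul_adjoint {q u s} :
  [pchar F].-nat q -> s ^+ q = s -> s != 1 -> u ^+ q != u ->
  mul_adjoint g u (-1 - u) -> mul_adjoint g (s * u) (-1 - s * u) ->
  forall l mu, g l mu = 0.
Proof.
move=> pq sq s_neq1 uq hu hsu.
set D := u ^+ q - u; have D_neq0 : D != 0 by rewrite subr_eq0.
have hD : mul_adjoint g D (- D).
  have := mul_adjointB (mul_adjoint_frobenius pq hu) hu.
  by rewrite (_ : _ - (-1 - u) = - D) // /D; ring.
have hsD : mul_adjoint g (s * D) (s * - D).
  have := mul_adjointB (mul_adjoint_frobenius pq hsu) hsu.
  by rewrite exprMn sq (_ : _ - (-1 - s * u) = s * - D) /D; [rewrite mulrBr | ring].
have hs : mul_adjoint g s s by apply: (mul_adjoint_cancel hD hsD); rewrite oppr_eq0.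
have := mul_adjointB (mul_adjointM hs hu) hsu.
rewrite subrr (_ : _ - (-1 - s * u) = 1 - s); last by ring.
by apply: mul_adjoint0_eq0; rewrite subr_eq0 eq_sym.
Qed.

End MulAdjoint.

Lemma pchar_nat_of_card {L : finFieldType} {q m : nat} :
  (exists p k : nat, prime p /\ q = (p ^ k.+1)%N) -> #|L| = (q ^ m)%N ->
  [pchar L].-nat q.
Proof.
move=> [p [k [p_pr ->]]] cardL.
have pL : p \in [pchar L] by apply: (card_finPcharP (n := k.+1 * m)); rewrite // cardL expnM.
by rewrite (eq_pnat _ (pcharf_eq pL)) pnatX pnat_id.
Qed.

Section Trace.
Context {L : finFieldType} {q m : nat}.

Lemma TrD : [pchar L].-nat q -> {morph @Tr L q m : a b / a + b}.
Proof.
move=> pq a b; rewrite /Tr -big_split; apply: eq_bigr => i _.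
by rewrite exprDn_pchar // pnatX pq.
Qed.

Lemma TrZ (c a : L) : c \in subGF q -> Tr q m (c * a) = c * Tr q m a.
Proof.
move=> /eqP cq; have cqi i : c ^+ (q ^ i) = c.
  by elim: i => [|i IHi]; rewrite ?expn0 ?expr1 // expnS exprM cq.
by rewrite /Tr mulr_sumr; apply: eq_bigr => i _; rewrite exprMn cqi.
Qed.

Lemma dual_basis_neq0 {B b : 'I_m -> L} :
  (0 < q)%N -> is_dual_basis q B b -> forall j, b j != 0.
Proof.
move=> q_gt0 hd j; apply/eqP => bj0; have := hd j j.
rewrite bj0 mulr0 eqxx /Tr big1 => [/esym/eqP|i _]; first by rewrite oner_eq0.
by rewrite expr0n expn_eq0 eqn0Ngt q_gt0.
Qed.

Lemma dual_basis_ratio_notin_subGF {B b : 'I_m -> L} {i j : 'I_m} :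
  (0 < q)%N -> is_dual_basis q B b -> i != j -> b i / b j \notin subGF q.
Proof.
move=> q_gt0 hd ij; apply/negP => ratio_in; have := hd i i.
rewrite -(divfK (dual_basis_neq0 q_gt0 hd j) (b i)) mulrCA TrZ // hd (negbTE ij).
by rewrite mulr0 eqxx => /esym/eqP; rewrite oner_eq0.
Qed.

End Trace.

Section ModifyDual.
Context {L : finFieldType} {W : zmodType} {h : L -> L -> W}.
Hypothesis hDl : forall x y z, h (x + y) z = h x z + h y z.
Hypothesis hDr : forall x y z, h x (y + z) = h x y + h x z.
Context {m : nat} {hm : (1 < m)%N} {b : 'I_m -> L}.
(* [b0] and [b1] are the paper's beta_1 and beta_2. *)
Local Notation b0 := (b (Ordinal (ltnW hm))).
Local Notation b1 := (b (Ordinal hm)).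

Lemma modify_dual_cross {a} :
  (forall l mu, \sum_i h (b i * l) (b i * mu) = 0) ->
  (forall l mu, \sum_i h (modify_dual hm b a i * l) (modify_dual hm b a i * mu) = 0) ->
  forall l mu,
    h (b0 * l) (a * b1 * mu) + h (a * b1 * l) (b0 * mu) + h (a * b1 * l) (a * b1 * mu) = 0.
Proof.
move=> so so' l mu; set i0 := Ordinal (ltnW hm).
have off i : i != i0 -> modify_dual hm b a i = b i.
  move=> ni; rewrite /modify_dual ifF //.
  by apply: contraNF ni => /eqP i_0; apply/eqP/val_inj.
have := etrans (so' l mu) (esym (so l mu)).
rewrite (bigD1 i0) // [in RHS](bigD1 i0) //=.
under eq_bigr => i ni do rewrite off //.
move/addIr; rewrite /modify_dual /= !mulrDl hDl !hDr => e.
by apply: (addrI (h (b0 * l) (b0 * mu))); rewrite addr0 -[RHS]e !addrA.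
Qed.

End ModifyDual.

Definition trace_row {L : finFieldType} (q m : nat) {n : nat} (x : 'rV[L]_n) : 'rV[L]_n :=
  \row_k Tr q m (x 0 k).

Definition trace_pairing {L : finFieldType} (q m : nat) {n : nat}
    (f : 'rV[L]_n -> 'rV[L]_n -> L) (x y : 'rV[L]_n) (l mu : L) : L :=
  f (trace_row q m (l *: x)) (trace_row q m (mu *: y)).

Section TraceCode.
Context {L : finFieldType} {q m n : nat}.

Lemma row_ImB_matrix (b : 'I_m -> L) (x : 'rV[L]_n) i :
  row i (\matrix_(i0 < m, k < n) Tr q m (b i0 * x 0 k)) = trace_row q m (b i *: x).
Proof. by apply/rowP => k; rewrite !mxE. Qed.

Hypothesis pq : [pchar L].-nat q.

Lemma trace_rowD : {morph @trace_row L q m n : x y / x + y}.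
Proof. by move=> x y; apply/rowP => k; rewrite !mxE TrD. Qed.

Context {C : {set 'rV[L]_n}} {f : 'rV[L]_n -> 'rV[L]_n -> L}.

Hypothesis hf : biadditive f.

Lemma trace_pairing_biadditive x y : biadditive (trace_pairing q m f x y).
Proof.
by case: hf => fDl fDr; split=> a b c; rewrite /trace_pairing scalerDl trace_rowD ?fDl ?fDr.
Qed.

Hypothesis hC : scalable_code C.

Lemma self_orth_ImB_sum {b : 'I_m -> L} {x y} :
  self_orth (induced f) (ImB q b C) -> x \in C -> y \in C ->
  forall l mu, \sum_i trace_pairing q m f x y (b i * l) (b i * mu) = 0.
Proof.
move=> so xC yC l mu.
have inImB z : z \in C -> \matrix_(i < m, k < n) Tr q m (b i * z 0 k) \in ImB q b C.
  by move=> zC; apply/imsetP; exists z.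
rewrite -[RHS](so _ _ (inImB _ (hC l _ xC)) (inImB _ (hC mu _ yC))).
by apply: eq_bigr => i _; rewrite !row_ImB_matrix /trace_pairing !scalerA.
Qed.

Lemma self_orth_TrC_of_trace :
  (forall x y, x \in C -> y \in C -> f (trace_row q m x) (trace_row q m y) = 0) ->
  self_orth f (TrC q m C).
Proof. by move=> orth _ _ /imsetP[x xC ->] /imsetP[y yC ->]; apply: orth. Qed.

Lemma self_orth_ImB_of_trace (b : 'I_m -> L) :
  (forall x y, x \in C -> y \in C -> f (trace_row q m x) (trace_row q m y) = 0) ->
  self_orth (induced f) (ImB q b C).
Proof.
move=> orth _ _ /imsetP[x xC ->] /imsetP[y yC ->]; rewrite /induced big1 // => i _.
by rewrite !row_ImB_matrix orth ?hC.
Qed.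

Lemma trace_row_orth {hm : (1 < m)%N} {B beta : 'I_m -> L} {alpha gamma : L} :
  alpha \in subGF q -> gamma \in subGF q -> alpha != 0 -> gamma != 0 -> alpha != gamma ->
  is_dual_basis q B beta ->
  self_orth (induced f) (ImB q beta C) ->
  self_orth (induced f) (ImB q (modify_dual hm beta alpha) C) ->
  self_orth (induced f) (ImB q (modify_dual hm beta gamma) C) ->
  forall x y, x \in C -> y \in C -> f (trace_row q m x) (trace_row q m y) = 0.
Proof.
move=> /eqP alpha_q /eqP gamma_q alpha0 gamma0 alpha_gamma hd so so_alpha so_gamma.
move=> x y xC yC.
have [hDl hDr] := trace_pairing_biadditive x y.
have q_gt0 : (0 < q)%N by case/andP: pq.
pose i0 := Ordinal (ltnW hm); pose i1 := Ordinal hm.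
have beta1_neq0 : beta i1 != 0 := dual_basis_neq0 q_gt0 hd i1.
pose t := beta i0 / beta i1.
have t_notin : t \notin subGF q := dual_basis_ratio_notin_subGF (i := i0) (j := i1) q_gt0 hd isT.
have beta0E : beta i0 = beta i1 * t by rewrite mulrC divfK.
pose g l mu := trace_pairing q m f x y (beta i1 * l) (beta i1 * mu).
have gDl l l' mu : g (l + l') mu = g l mu + g l' mu by rewrite /g mulrDr hDl.
have gDr l mu mu' : g l (mu + mu') = g l mu + g l mu' by rewrite /g mulrDr hDr.
have adjoint_of_orth a : a != 0 -> self_orth (induced f) (ImB q (modify_dual hm beta a) C) ->
    mul_adjoint g (t / a) (-1 - t / a).
  move=> a0 so_a; apply: (mul_adjoint_of_cross gDr a0) => l mu.
  have := modify_dual_cross hDl hDr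
    (self_orth_ImB_sum so xC yC) (self_orth_ImB_sum so_a xC yC) l mu.
  by rewrite beta0E -!mulrA !(mulrCA a).
have s_q : (alpha / gamma) ^+ q = alpha / gamma by rewrite expr_div_n alpha_q gamma_q.
have s_neq1 : alpha / gamma != 1 by apply: contra alpha_gamma => /eqP/divr1_eq/eqP.
have u_q : (t / alpha) ^+ q != t / alpha.
  by apply: contra t_notin; rewrite expr_div_n alpha_q => /eqP/(mulIf (invr_neq0 alpha0))/eqP.
have adjoint_gamma :
    mul_adjoint g (alpha / gamma * (t / alpha)) (-1 - alpha / gamma * (t / alpha)).
  by rewrite [alpha / gamma * _]mulrC mulrA divfK //; apply: adjoint_of_orth.
have := biadditive_eq0_of_mul_adjoint gDl gDr pq s_q s_neq1 u_q
  (adjoint_of_orth _ alpha0 so_alpha) adjoint_gamma.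
by move/(_ (beta i1)^-1 (beta i1)^-1); rewrite /g /trace_pairing mulfV // !scale1r.
Qed.

End TraceCode.

Theorem theorem4 (L : finFieldType) (q m n : nat)
  (hqpp : exists p k : nat, prime p /\ q = (p ^ k.+1)%N)
  (hq : (2 < q)%N) (hm : (1 < m)%N) (hn : (0 < n)%N)
  (hL : #|L| = (q ^ m)%N)
  (C : {set 'rV[L]_n}) (hC : scalable_code C)
  (f : 'rV[L]_n -> 'rV[L]_n -> L) (hf : biadditive f)
  (beta : 'I_m -> L) (alpha gamma : L)
  (halpha : alpha \in subGF q) (hgamma : gamma \in subGF q)
  (halpha0 : alpha != 0) (hgamma0 : gamma != 0) (hag : alpha != gamma)
  (B1 B2 B3 : 'I_m -> L)
  (hB1 : is_basis q B1) (hB2 : is_basis q B2) (hB3 : is_basis q B3)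
  (hd1 : is_dual_basis q B1 beta)
  (hd2 : is_dual_basis q B2 (modify_dual hm beta alpha))
  (hd3 : is_dual_basis q B3 (modify_dual hm beta gamma))
  (hso1 : self_orth (induced f) (ImB q beta C))
  (hso2 : self_orth (induced f) (ImB q (modify_dual hm beta alpha) C))
  (hso3 : self_orth (induced f) (ImB q (modify_dual hm beta gamma) C)) :
  self_orth f (TrC q m C) /\
  (forall B b : 'I_m -> L, is_basis q B -> is_dual_basis q B b ->
     self_orth (induced f) (ImB q b C)).
Proof.
have pq := pchar_nat_of_card hqpp hL.
have orth := trace_row_orth pq hf hC halpha hgamma halpha0 hgamma0 hag hd1 hso1 hso2 hso3.
split; first exact: self_orth_TrC_of_trace orth.
by move=> B b _ _; apply: self_orth_ImB_of_trace.
Qed.
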